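(* For every $1\leq p <\infty$, $B^{p}$ is a Banach space.
   Context: Let $\mathcal{B}$ be the Borel $\sigma$-algebra of $\mathbb{R}$, $\lambda$ the Lebesgue measure, and $\mathcal{B}_{\infty}$ the $\sigma$-algebra on $\mathbb{R}^{\mathbb{N}}$ generated by the cylinder sets $\prod_{i=1}^{m}C_{i}\times\prod_{i=m+1}^{\infty}\mathbb{R}$ with $C_i\in\mathcal{B}$, $m\in\mathbb{N}$. Let $\mathcal{F}(\mathcal{B},\lambda)$ be the set of finite rectangles $\prod_{i\in\mathbb{N}}C_{i}$ with $C_i\in\mathcal{B}$ and $\prod_{i}\lambda(C_i)\in[0,\infty)$, with $\mathrm{vol}(\prod_{i}C_i):=\prod_i\lambda(C_i)$. The measure $\mu$ is the restriction to $\mathcal{B}_{\infty}$ of the outer measure $\mu^{\ast}(A):=\inf\{\sum_{n}\mathrm{vol}(\mathscr{C}_{n}) : \mathscr{C}_{n}\in\mathcal{F}(\mathcal{B},\lambda),\ A\subset\bigcup_{n}\mathscr{C}_{n}\}$ ($\inf\varnothing=\infty$). Let $I:=\mathbb{Z}^{\mathbb{N}}$ and, for $\mathfrak{a}=(a_n)\in I$, $\mathcal{C}_{\mathfrak{a}}:=\prod_{n\in\mathbb{N}}[a_{n},a_{n}+1)$. Define $B^{p}:=\{f\in L^{p}(\mu) : \int_{\mathcal{C}_{\mathfrak{a}}}|f|^{p}\,d\mu=0 \text{ for each } \mathfrak{a}\in I\}$, with the $L^p(\mu)$ norm. *)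

From HB Require Import structures.
From mathcomp Require Import all_boot all_order all_algebra.
From mathcomp Require Import all_classical all_reals all_analysis.

Set Implicit Arguments.
Unset Strict Implicit.
Unset Printing Implicit Defensive.
Import Order.TTheory GRing.Theory Num.Theory.
Import numFieldNormedType.Exports.

Local Open Scope classical_set_scope.
Local Open Scope ring_scope.

Section Defs.
Variable R : realType.

(* Points of R^N are sequences x : nat -> R (the index set N is taken to be
   nat = {0,1,2,...}; this is just a relabelling of {1,2,...}). *)

(* Borel sets of R: the canonical sigma-algebra of measurableTypeR R
   (generated by half-open intervals, i.e. the Borel sigma-algebra). *)
Definition borelR (C : set R) : Prop := @measurable _ (measurableTypeR R) C.

Definition rect (C : nat -> set R) : set (nat -> R) :=
  [set x | forall i, C i (x i)].

Definition cylinders : set (set (nat -> R)) :=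
  [set A | exists (m : nat) (C : nat -> set R),
      (forall i, (i < m)%N -> borelR (C i)) /\
      A = [set x | forall i, (i < m)%N -> C i (x i)]].

Definition Binf := g_sigma_algebraType cylinders.

Definition rect_vol (C : nat -> set R) (v : R) : Prop :=
  ((fun n => \prod_(i < n) lebesgue_measure (C i)) @ \oo --> v%:E)%E.

Definition finite_rect (C : nat -> set R) (v : R) : Prop :=
  (forall i, borelR (C i)) /\ rect_vol C v.

(* The outer measure mu^* (inf of the empty set is +oo). *)
Definition mu_star (A : set (nat -> R)) : \bar R :=
  ereal_inf [set s : \bar R | exists (C : nat -> nat -> set R) (v : nat -> R),
     [/\ forall n, finite_rect (C n) (v n),
         A `<=` \bigcup_n rect (C n) &
         s = (\sum_(0 <= n <oo) (v n)%:E)%E]].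

Definition cube (a : nat -> int) : set (nat -> R) :=
  rect (fun n => [set y : R | (a n)%:~R <= y < (a n + 1)%:~R]).

Definition Lp (mu : {measure set Binf -> \bar R}) (p : R) (f : Binf -> R) :
  Prop := measurable_fun setT f /\ finite_norm mu p%:E f.

Definition Bp (mu : {measure set Binf -> \bar R}) (p : R) (f : Binf -> R) :
  Prop :=
  Lp mu p f /\
  forall a : nat -> int,
    (\int[mu]_(x in (cube a : set Binf)) ((`|f x| `^ p)%:E) = 0)%E.

Definition Lpnorm (mu : {measure set Binf -> \bar R}) (p : R)
  (f : Binf -> R) : \bar R := Lnorm mu p%:E (EFin \o f).

End Defs.

From HB Require Import structures.
From mathcomp Require Import all_boot all_order all_algebra.
From mathcomp Require Import all_classical all_reals all_analysis.
From mathcomp Require Import measurable_realfun.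
Import Order.TTheory GRing.Theory Num.Theory.
Import numFieldNormedType.Exports.
Local Open Scope classical_set_scope.
Local Open Scope ring_scope.

(* Each condition [\int_(C_a) |f|^p = 0] says that f vanishes a.e. on the cube
   C_a; it is preserved by linear combinations, and by L^p limits since
   |f| = |u_n - f| a.e. on C_a whenever u_n vanishes there.  So B^p is a closed
   subspace of L^p(mu), and it remains to prove that L^p(mu) is complete
   (Riesz-Fischer): a Cauchy sequence has a subsequence with
   ||u_(s (k+1)) - u_(s k)||_p < 2^-k; by Minkowski and monotone convergence
   sum_k |u_(s (k+1)) - u_(s k)| is finite a.e., so u_(s k) converges a.e. to
   some f, and Fatou's lemma bounds ||u_n - f||_p by the Cauchy modulus. *)

Section reals.
Context {R : realType}.

Lemma cvg_powR_norm (p : R) (a : R^nat) (l : R) : 0 < p ->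
  a @ \oo --> l -> (fun k => `|a k| `^ p) @ \oo --> `|l| `^ p.
Proof.
move=> p_gt0 /cvg_norm al; have [l0|l_neq0] := eqVneq l 0.
  rewrite l0 normr0 powR0 ?gt_eqF //; move: al; rewrite l0 normr0 => al.
  apply/cvgrPdist_lt => e e_gt0.
  have ep_gt0 : 0 < e `^ p^-1 by rewrite powR_gt0.
  near=> k; rewrite sub0r normrN ger0_norm ?powR_ge0 //.
  have : `|a k| < e `^ p^-1.
    near: k; move/cvgrPdist_lt : al => /(_ _ ep_gt0).
    by apply: filterS => k; rewrite sub0r normrN normr_id.
  move/(gt0_ltr_powR p_gt0); rewrite -powRrM mulVf ?gt_eqF // powRr1 ?ltW //.
  by apply; rewrite nnegrE ?powR_ge0.
have l_gt0 : 0 < `|l| by rewrite normr_gt0.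
have powRE z : 0 < z -> z `^ p = expR (p * ln z).
  by move=> z_gt0; rewrite /powR gt_eqF.
rewrite powRE //.
have : (fun k => expR (p * ln `|a k|)) @ \oo --> expR (p * ln `|l|).
  apply: continuous_cvg; first exact: continuous_expR.
  by apply: cvgMl_tmp; apply: continuous_cvg => //; exact: continuous_ln.
apply: cvg_trans; apply: near_eq_cvg; near=> k.
by rewrite powRE //; near: k; exact: cvgr_gt al _ l_gt0.
Unshelve. all: by end_near. Qed.

Lemma nneseq_cvge0P (x : (\bar R)^nat) : (forall n, 0 <= x n)%E ->
  x @ \oo --> 0%E <->
  forall e : R, 0 < e -> \forall n \near \oo, (x n <= e%:E)%E.
Proof.
move=> x_ge0; split => [/fine_cvgP[x_fin /cvgrPdist_le x_cvg] e e_gt0|x_le].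
  near=> n; rewrite -(@fineK _ (x n)); last by near: n.
  rewrite lee_fin; apply: le_trans (ler_norm _) _; rewrite -normrN -sub0r.
  by near: n; exact: x_cvg.
have x_fin : \forall n \near \oo, x n \is a fin_num.
  apply: filterS (x_le _ ltr01) => n xn_le1.
  by rewrite ge0_fin_numE // (le_lt_trans xn_le1) ?ltry.
apply/fine_cvgP; split => //; apply/cvgrPdist_le => e e_gt0.
near=> n; rewrite sub0r normrN ger0_norm ?fine_ge0 // -lee_fin fineK //.
  by near: n; exact: x_le.
by near: n.
Unshelve. all: by end_near. Qed.

Lemma sum_half_powers_le2 (K : nat) : \sum_(k < K) (2^-1 : R) ^+ k <= 2.
Proof.
have half_gt0 : 0 < 2^-1 :> R by rewrite invr_gt0.
have half_lt1 : `|2^-1| < 1 :> R by rewrite gtr0_norm // invf_lt1 // ltr1n.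
have := geometric_le_lim K ler01 half_gt0 half_lt1.
rewrite seriesEord /= mul1r [X in X - _](splitr 1) div1r addrK invrK.
by apply: le_trans; under [leRHS]eq_bigr do rewrite mul1r.
Qed.

End reals.

Section Lnorm_real_functions.
Context {d : measure_display} {T : measurableType d} {R : realType}.
Variables (mu : {measure set T -> \bar R}) (p : R).
Hypothesis p1 : 1 <= p.
Local Notation N f := (Lnorm mu p%:E (EFin \o f)).

Let p_gt0 : 0 < p. Proof. exact: lt_le_trans ltr01 p1. Qed.
Let p_neq0 : p != 0. Proof. by rewrite gt_eqF. Qed.

Lemma measurable_powR_norm (f : T -> R) : measurable_fun setT f ->
  measurable_fun setT (fun x => (`|f x| `^ p)%:E).
Proof.
move=> mf; apply/measurable_EFinP.
by apply: (measurableT_comp (measurable_powR _)); exact: measurableT_comp.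
Qed.

Lemma Lnorm_le_EFin (f : T -> R) (e : R) : 0 <= e ->
  (N f <= e%:E)%E = (\int[mu]_x (`|f x| `^ p)%:E <= (e `^ p)%:E)%E.
Proof.
move=> e_ge0.
have -> : (\int[mu]_x (`|f x| `^ p)%:E = N f `^ p)%E by rewrite powR_Lnorm.
have in_ge0 (x : \bar R) : (0 <= x)%E -> x \in `[0, +oo]%E.
  by move=> x_ge0; rewrite in_itv /= x_ge0 leey.
have poweRK (x : \bar R) : (0 <= x)%E -> x = ((x `^ p) `^ p^-1)%E.
  by move=> x_ge0; rewrite -poweRrM mulfV // poweRe1.
have Nf_ge0 : (0 <= N f)%E by exact: Lnorm_ge0.
have eE_ge0 : (0 <= e%:E)%E by rewrite lee_fin.
rewrite -poweR_EFin; apply/idP/idP => Nf_le.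
  exact: (gt0_ler_poweR (ltW p_gt0) (in_ge0 _ Nf_ge0) (in_ge0 _ eE_ge0) Nf_le).
rewrite [leLHS]poweRK // [leRHS]poweRK //.
have pV_ge0 : 0 <= p^-1 by rewrite invr_ge0 ltW.
exact: (gt0_ler_poweR pV_ge0 (in_ge0 _ (poweR_ge0 _ _))
  (in_ge0 _ (poweR_ge0 _ _)) Nf_le).
Qed.

Lemma ae_eq_Lnorm (f g : T -> R) :
  measurable_fun setT f -> measurable_fun setT g ->
  f = g %[ae mu] -> N f = N g.
Proof.
move=> mf mg fg; rewrite unlock; congr (_ `^ _)%E.
apply: ae_eq_integral => //; try exact: measurable_powR_norm.
by apply: filterS fg => x /= ->.
Qed.

Lemma Lnorm_le_of_cvg (h : (T -> R)^nat) (f : T -> R) (e : R) : 0 <= e ->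
  (forall k, measurable_fun setT (h k)) -> (forall x, h ^~ x @ \oo --> f x) ->
  (\forall k \near \oo, N (h k) <= e%:E)%E -> (N f <= e%:E)%E.
Proof.
move=> e_ge0 mh hf h_le; rewrite Lnorm_le_EFin //.
pose F k x := (`|h k x| `^ p)%:E.
have F_cvg x : F ^~ x @ \oo --> (`|f x| `^ p)%:E.
  by apply/fine_cvgP; split; [exact: nearW|exact: cvg_powR_norm].
under eq_integral => x _ do rewrite -(cvg_limn_einf_sup (F_cvg x)).1.
have F_ge0 k x : setT x -> (0 <= F k x)%E by rewrite lee_fin powR_ge0.
have mF k : measurable_fun setT (F k) by exact: measurable_powR_norm.
apply: le_trans (fatou mu measurableT mF F_ge0) _.
rewrite limn_einf_lim; apply: lime_le; first exact: is_cvg_einfs.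
apply: filterS h_le => n; rewrite Lnorm_le_EFin // => hn_le.
by apply: le_trans hn_le; apply: ereal_inf_lbound; exists n => /=.
Qed.

Lemma Lnorm_sum_le (v : (T -> R)^nat) (K : nat) :
  (forall k, measurable_fun setT (v k)) ->
  (N (fun x => (\sum_(k < K) v k x)%R) <= \sum_(k < K) N (v k))%E.
Proof.
move=> mv; elim: K => [|K IH].
  rewrite big_ord0 (eq_Lnorm _ _ (g := cst 0%E)) ?Lnorm0 // => x.
  by rewrite /= big_ord0.
pose S x := \sum_(k < K) v k x.
rewrite big_ord_recr /= (eq_Lnorm _ _ (g := EFin \o (S \+ v K)%R)); last first.
  by move=> x; rewrite /= big_ord_recr.
apply: le_trans (minkowski_EFin _ _ _ _) (leeD IH _) => //.
by apply: measurable_sum => k.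
Qed.

Lemma nondecreasing_Lnorm_bounded_ae_cvg (g : (T -> R)^nat) (b : R) :
  (forall K, measurable_fun setT (g K)) -> (forall K x, 0 <= g K x) ->
  (forall x, nondecreasing_seq (g ^~ x)) -> (forall K, N (g K) <= b%:E)%E ->
  {ae mu, forall x, cvgn (g ^~ x)}.
Proof.
move=> mg g_ge0 g_nd g_le.
have b_ge0 : 0 <= b.
  by rewrite -lee_fin; exact: le_trans (Lnorm_ge0 _ _ _) (g_le 0%N).
pose F K x := (`|g K x| `^ p)%:E.
have mF K : measurable_fun setT (F K) by exact: measurable_powR_norm.
have F_ge0 K x : (0 <= F K x)%E by rewrite lee_fin powR_ge0.
have F_nd x : nondecreasing_seq (F ^~ x).
  move=> m n mn; rewrite lee_fin ge0_ler_powR ?nnegrE ?(ltW p_gt0) //.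
  by rewrite !ger0_norm //; exact: g_nd.
pose Fl x := limn (F ^~ x).
have F_cvg x : F ^~ x @ \oo --> Fl x by exact: ereal_nondecreasing_is_cvgn.
have F_le_Fl K x : (F K x <= Fl x)%E.
  by apply: lime_ge; [exact: F_cvg|near=> n; apply: F_nd; near: n; exists K].
have Fl_int : mu.-integrable setT Fl.
  apply/integrableP; split.
    by apply: (@emeasurable_fun_cvg _ _ _ _ F) => // x _; exact: F_cvg.
  apply: (@le_lt_trans _ _ (b `^ p)%:E); last exact: ltry.
  under eq_integral => x _ do rewrite gee0_abs ?(le_trans (F_ge0 0%N x)) //.
  rewrite monotone_convergence //.
  apply: lime_le; last by apply: nearW => K; rewrite -Lnorm_le_EFin.
  apply: ereal_nondecreasing_is_cvgn => m n mn.
  by apply: ge0_le_integral => // x _; exact: F_nd.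
apply: filterS (integrable_ae measurableT Fl_int) => x /(_ I) Fl_fin.
apply: nondecreasing_is_cvgn => //; exists (1 + fine (Fl x)) => _ [K _ <-].
have [gK_le1|gK_gt1] := leP (g K x) 1.
  by rewrite ler_wpDr // fine_ge0 // (le_trans (F_ge0 0%N x)).
have gK_le : `|g K x| `^ p <= fine (Fl x).
  by rewrite -lee_fin fineK //; exact: F_le_Fl.
apply: le_trans (ler_wpDl ler01 gK_le); rewrite ger0_norm //.
by apply: le1r_powR => //; exact: ltW.
Unshelve. all: by end_near. Qed.

Lemma Lnorm_summable_ae_cvg (v : (T -> R)^nat) (b : R) :
  (forall k, measurable_fun setT (v k)) ->
  (forall K, \sum_(k < K) N (v k) <= b%:E)%E ->
  {ae mu, forall x, cvgn (series (v ^~ x))}.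
Proof.
move=> mv v_le.
pose g K x := \sum_(k < K) `|v k x|.
have mg K : measurable_fun setT (g K).
  by apply: measurable_sum => k; exact: measurableT_comp.
have g_le K : (N (g K) <= b%:E)%E.
  apply: le_trans (Lnorm_sum_le (fun k x => `|v k x|) K _) (le_trans _ (v_le K)).
    by move=> k; exact: measurableT_comp.
  by apply: lee_sum => k _; rewrite -(Lnorm_abse mu (EFin \o v k)).
have g_nd x : nondecreasing_seq (g ^~ x).
  by apply/nondecreasing_seqP => K; rewrite /g big_ord_recr lerDl.
have g_ge0 K x : 0 <= g K x by exact: sumr_ge0.
have := nondecreasing_Lnorm_bounded_ae_cvg _ _ mg g_ge0 g_nd g_le.
apply: filterS => x gx; apply: normed_cvg.
suff -> : [normed series (v ^~ x)] = g ^~ x by [].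
by apply/funext => K; rewrite /normed_series_of seriesEord.
Qed.

Definition Lnorm_cauchy (u : (T -> R)^nat) := forall e : R, 0 < e ->
  exists M : nat, forall m n : nat, (M <= m)%N -> (M <= n)%N ->
    (N (fun x => (u m x - u n x)%R) < e%:E)%E.

Lemma Lnorm_cauchy_subseq (u : (T -> R)^nat) : Lnorm_cauchy u ->
  exists s : nat -> nat, (forall k, (k <= s k)%N) /\
    forall k, (N (fun x => (u (s k.+1) x - u (s k) x)%R) < ((2^-1) ^+ k)%:E)%E.
Proof.
move=> u_cauchy.
have half_gt0 : 0 < 2^-1 :> R by rewrite invr_gt0.
have /choice[M M_cauchy] k := u_cauchy _ (exprn_gt0 k half_gt0).
pose s := fix s k := if k is k'.+1 then maxn (s k').+1 (M k) else M 0%N.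
have M_le_s k : (M k <= s k)%N by case: k => [|k] //=; rewrite leq_maxr.
have s_lt k : (s k < s k.+1)%N by rewrite /= leq_maxl.
exists s; split => [k|k].
  by elim: k => // k IH; exact: leq_ltn_trans IH (s_lt k).
by apply: M_cauchy => //; exact: leq_trans (M_le_s k) (ltnW (s_lt k)).
Qed.

Lemma Lnorm_cauchy_ae_cvg_subseq (u : (T -> R)^nat) :
  (forall n, measurable_fun setT (u n)) -> Lnorm_cauchy u ->
  exists s : nat -> nat, (forall k, (k <= s k)%N) /\
    {ae mu, forall x, cvgn (fun k => u (s k) x)}.
Proof.
move=> mun u_cauchy; have [s [s_ge s_fast]] := Lnorm_cauchy_subseq _ u_cauchy.
exists s; split => //.
pose v k x := u (s k.+1) x - u (s k) x.
have mv k : measurable_fun setT (v k) by exact: measurable_funB.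
have v_sum K : (\sum_(k < K) N (v k) <= 2%:E)%E.
  apply: le_trans (_ : _ <= \sum_(k < K) ((2^-1) ^+ k)%:E)%E _.
    by apply: lee_sum => k _; exact/ltW/s_fast.
  by rewrite sumEFin lee_fin sum_half_powers_le2.
apply: filterS (Lnorm_summable_ae_cvg _ _ mv v_sum) => x v_cvg.
have -> : (fun k => u (s k) x) = (cst (u (s 0%N) x) + series (v ^~ x))%R.
  by apply/funext => k; rewrite (eq_sum_telescope (fun k => u (s k) x)).
exact: is_cvgD (is_cvg_cst _) v_cvg.
Qed.

Theorem Lnorm_cauchy_cvg (u : (T -> R)^nat) :
  (forall n, measurable_fun setT (u n)) ->
  (forall n, finite_norm mu p%:E (u n)) -> Lnorm_cauchy u ->
  exists f : T -> R, [/\ measurable_fun setT f, finite_norm mu p%:E f &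
    (fun n => N (fun x => (u n x - f x)%R)) @ \oo --> 0%E].
Proof.
move=> mun u_fin u_cauchy.
have [s [s_ge [Z [mZ Z0 Z_cvg]]]] := Lnorm_cauchy_ae_cvg_subseq _ mun u_cauchy.
(* Patched to 0 on the null set Z, the subsequence converges everywhere. *)
pose h k := u (s k) \_ (~` Z).
have mh k : measurable_fun setT (h k).
  apply/(measurable_restrictT _ _).1; first exact: measurableC.
  exact: measurable_funS (mun (s k)).
have h_cvg x : cvgn (h ^~ x).
  rewrite /h; have [Zx|Zx] := pselect (Z x).
    by under eq_fun => k do rewrite patchE memNset //=; exact: is_cvg_cst.
  under eq_fun => k do rewrite patchE mem_set //=.
  by apply: contrapT => ncvg; apply: Zx; exact: Z_cvg.
have h_ae k : h k = u (s k) %[ae mu].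
  exists Z; split => // x /= hx; apply: contrapT => Zx; apply: hx => _.
  by rewrite /h patchE mem_set.
pose f x := limn (h ^~ x).
have mf : measurable_fun setT f by exact: (measurable_fun_cvg mh) => x _.
have uf_le e : 0 < e -> exists M, forall n, (M <= n)%N ->
    (N (fun x => (u n x - f x)%R) <= e%:E)%E.
  move=> e_gt0; have [M M_cauchy] := u_cauchy e e_gt0; exists M => n Mn.
  apply: (@Lnorm_le_of_cvg (fun k x => u n x - h k x)) => [|k|x|].
  - exact: ltW.
  - exact: measurable_funB.
  - by apply: cvgB; [exact: cvg_cst|exact: h_cvg].
  near=> k; rewrite (@ae_eq_Lnorm _ (fun x => (u n x - u (s k) x)%R)).
  - apply/ltW/M_cauchy => //; near: k.
    by exists M => // k /= Mk; exact: leq_trans Mk (s_ge k).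
  - exact: measurable_funB.
  - exact: measurable_funB.
  - by apply: filterS (h_ae k) => x /= ->.
exists f; split => //.
- have [M1 M1_le] := uf_le 1 ltr01.
  have muf : measurable_fun setT (fun x => u M1 x - f x).
    exact: measurable_funB.
  apply: le_lt_trans (lerB_DLnorm mu mf muf p1) _.
  rewrite (eq_Lnorm _ _ (g := EFin \o u M1)); last by move=> x /=; rewrite subrKC.
  apply: lte_add_pinfty; first exact: u_fin.
  exact: le_lt_trans (M1_le _ (leqnn _)) (ltry _).
- apply/nneseq_cvge0P => [n|e e_gt0]; first exact: Lnorm_ge0.
  by have [M M_le] := uf_le e e_gt0; near=> n; apply: M_le; near: n; exists M.
Unshelve. all: by end_near. Qed.

Lemma integral_powR_eq0P (D : set T) (f : T -> R) :
  measurable D -> measurable_fun setT f ->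
  (\int[mu]_(x in D) (`|f x| `^ p)%:E = 0)%E <->
  {ae mu, forall x, D x -> f x = 0}.
Proof.
move=> mD mf.
have -> : (\int[mu]_(x in D) (`|f x| `^ p)%:E =
           \int[mu]_(x in D) `|(`|f x| `^ p)%:E|)%E.
  by apply: eq_integral => x _; rewrite gee0_abs // lee_fin powR_ge0.
rewrite ae_eq_integral_abs //; last first.
  exact: measurable_funS (measurable_powR_norm _ mf).
split; apply: filterS => x + Dx => /(_ Dx) /=.
  by move=> [] /powR_eq0_eq0 /normr0_eq0.
by move=> ->; rewrite normr0 powR0.
Qed.

Lemma integral_powR_eq0D (D : set T) (f g : T -> R) (c : R) :
  measurable D -> measurable_fun setT f -> measurable_fun setT g ->
  (\int[mu]_(x in D) (`|f x| `^ p)%:E = 0)%E ->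
  (\int[mu]_(x in D) (`|g x| `^ p)%:E = 0)%E ->
  (\int[mu]_(x in D) (`|c * f x + g x| `^ p)%:E = 0)%E.
Proof.
move=> mD mf mg; rewrite !integral_powR_eq0P //; last first.
  by apply: measurable_funD => //; exact: measurable_funM.
move=> f0 g0; apply: filterS2 f0 g0 => x f0 g0 Dx.
by rewrite f0 // g0 // mulr0 addr0.
Qed.

Lemma integral_powR_eq0_cvg (D : set T) (u : (T -> R)^nat) (f : T -> R) :
  measurable D -> (forall n, measurable_fun setT (u n)) ->
  measurable_fun setT f ->
  (forall n, \int[mu]_(x in D) (`|u n x| `^ p)%:E = 0)%E ->
  (fun n => N (fun x => (u n x - f x)%R)) @ \oo --> 0%E ->
  (\int[mu]_(x in D) (`|f x| `^ p)%:E = 0)%E.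
Proof.
move=> mD mun mf u0 uf.
have int_le n : (\int[mu]_(x in D) (`|f x| `^ p)%:E <=
                 \int[mu]_x (`|u n x - f x| `^ p)%:E)%E.
  have muf : measurable_fun setT (fun x => u n x - f x).
    exact: measurable_funB.
  rewrite (ae_eq_integral (fun x => (`|u n x - f x| `^ p)%:E)) //.
  - by apply: ge0_subset_integral => //; exact: measurable_powR_norm.
  - exact: measurable_funS (measurable_powR_norm _ mf).
  - exact: measurable_funS (measurable_powR_norm _ muf).
  apply: filterS ((integral_powR_eq0P _ _ mD (mun n)).1 (u0 n)) => x un0 Dx.
  by rewrite un0 // sub0r normrN.
apply/eqP; rewrite eq_le integral_ge0 ?andbT; last first.
  by move=> x _; rewrite lee_fin powR_ge0.
apply/lee_addgt0Pr => e e_gt0; rewrite add0e.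
have ep_gt0 : 0 < e `^ p^-1 by rewrite powR_gt0.
have epK : (e `^ p^-1) `^ p = e by rewrite -powRrM mulVf // powRr1 // ltW.
near \oo => n; apply: le_trans (int_le n) _.
rewrite -epK -(Lnorm_le_EFin (fun x => u n x - f x)) ?powR_ge0 //; near: n.
have Nuf_ge0 n : (0 <= N (fun x => (u n x - f x)%R))%E by exact: Lnorm_ge0.
exact: (nneseq_cvge0P _ Nuf_ge0).1 uf _ ep_gt0.
Unshelve. all: by end_near. Qed.

End Lnorm_real_functions.

Lemma measurable_cube {R : realType} (a : nat -> int) :
  measurable (cube a : set (Binf R)).
Proof.
pose C n := [set y : R | (a n)%:~R <= y < (a n + 1)%:~R].
have -> : cube a =
    \bigcap_m [set x : Binf R | forall i, (i < m)%N -> C i (x i)].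
  apply/seteqP; split => [x xa m _ i _|x xa i]; first exact: xa.
  exact: xa i.+1 I i (ltnSn i).
apply: bigcapT_measurable => m; apply: sub_sigma_algebra.
exists m, C; split => // i _.
rewrite (_ : C i = `[(a i)%:~R, (a i + 1)%:~R[%classic).
  exact: measurable_itv.
by apply/seteqP; split => y; rewrite /= in_itv.
Qed.

Lemma LpE (R : realType) (mu : {measure set Binf R -> \bar R}) (p : R)
    (f : Binf R -> R) :
  Lp mu p f <-> f \in Lfun mu p%:E.
Proof.
rewrite !inE; split => [[mf f_fin]|/andP[]]; last by rewrite !inE.
by apply/andP; split; rewrite inE.
Qed.

Theorem lemma3p5 (R : realType) (mu : {measure set Binf R -> \bar R})
  (mu_def : forall A : set (Binf R), measurable A -> mu A = mu_star A)
  (p : R) (p1 : 1 <= p) :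
  [/\ Bp mu p (fun _ => 0),
      (forall (f g : Binf R -> R) (c : R), Bp mu p f -> Bp mu p g ->
         Bp mu p (fun x => c * f x + g x)) &
      (forall u : nat -> Binf R -> R,
         (forall n, Bp mu p (u n)) ->
         (forall e : R, 0 < e -> exists N : nat, forall m n : nat,
            (N <= m)%N -> (N <= n)%N ->
            (Lpnorm mu p (fun x => (u m x - u n x)%R) < e%:E)%E) ->
         exists f : Binf R -> R, Bp mu p f /\
           ((fun n => Lpnorm mu p (fun x => (u n x - f x)%R)) @ \oo --> 0%E))].
Proof.
have p1E : (1 <= p%:E)%E by rewrite lee_fin.
split.
- split; first exact/LpE/(Lfun_submod_closed mu p1E).1.
  move=> a; rewrite (eq_integral (cst 0%E)) ?integral0 // => x _.
  by rewrite normr0 powR0 // gt_eqF // (lt_le_trans ltr01 p1).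
- move=> f g c [fL f0] [gL g0]; split.
    by apply/LpE; have := (Lfun_submod_closed mu p1E).2 c f g; apply; exact/LpE.
  move=> a; exact: integral_powR_eq0D mu p p1 _ _ _ _ (measurable_cube a)
    fL.1 gL.1 (f0 a) (g0 a).
- move=> u uB u_cauchy.
  have mun n : measurable_fun setT (u n) := (uB n).1.1.
  have [f [mf f_fin uf]] :=
    Lnorm_cauchy_cvg mu p p1 _ mun (fun n => (uB n).1.2) u_cauchy.
  exists f; split => //; split => [//|a].
  exact: integral_powR_eq0_cvg mu p p1 _ _ _ (measurable_cube a) mun mf
    (fun n => (uB n).2 a) uf.
Qed.
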